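(* If $G$ is a connected triangle-free graph on $n\ge 3$ vertices, then $\gamma_{rdR}(G)\le 2\gamma_{rR}(G)-2$.
   Context: All graphs are finite and simple. An RDRD function of $G$ is a function $f:V(G)\to\{0,1,2,3\}$ such that every vertex with value $0$ has at least two neighbors with value $2$ or at least one neighbor with value $3$, every vertex with value $1$ has a neighbor with value $2$ or $3$, and the subgraph induced by the vertices with value $0$ has no isolated vertices; $\gamma_{rdR}(G)$ is the minimum of $\sum_v f(v)$ over RDRD functions. A restrained Roman dominating function (RRD function) of $G$ is a function $f:V(G)\to\{0,1,2\}$ such that every vertex with value $0$ has a neighbor with value $2$, and the subgraph induced by the vertices with value $0$ has no isolated vertices; $\gamma_{rR}(G)$ is the minimum of $\sum_v f(v)$ over RRD functions. *)

From mathcomp Require Import all_boot all_order.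
Set Implicit Arguments. Unset Strict Implicit. Unset Printing Implicit Defensive.

Definition simple_graph (T : finType) (e : rel T) : Prop :=
  symmetric e /\ irreflexive e.

Definition connected_graph (T : finType) (e : rel T) : Prop :=
  forall x y : T, connect e x y.

Definition triangle_free (T : finType) (e : rel T) : Prop :=
  forall x y z : T, ~~ [&& e x y, e y z & e z x].

Definition weight (T : finType) (k : nat) (f : {ffun T -> 'I_k}) : nat :=
  \sum_(v : T) (nat_of_ord (f v)).

Definition is_RDRD (T : finType) (e : rel T) (f : {ffun T -> 'I_4}) : bool :=
  [forall v : T,
     ((nat_of_ord (f v) == 0) ==>
        ((2 <= #|[set u | e v u & nat_of_ord (f u) == 2]|)
         || [exists u, e v u && (nat_of_ord (f u) == 3)]))
     && ((nat_of_ord (f v) == 1) ==>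
        [exists u, e v u && (2 <= nat_of_ord (f u))])
     && ((nat_of_ord (f v) == 0) ==>
        [exists u, e v u && (nat_of_ord (f u) == 0)])].

Definition is_RRD (T : finType) (e : rel T) (f : {ffun T -> 'I_3}) : bool :=
  [forall v : T,
     ((nat_of_ord (f v) == 0) ==>
        [exists u, e v u && (nat_of_ord (f u) == 2)])
     && ((nat_of_ord (f v) == 0) ==>
        [exists u, e v u && (nat_of_ord (f u) == 0)])].

(* The neutral elements 3*#|T| and 2*#|T| are the weights
   of the constant-3 (resp. constant-2) functions, which are always RDRD
   (resp. RRD), so the minima below are the true minima. *)
Definition gamma_rdR (T : finType) (e : rel T) : nat :=
  \big[minn/3 * #|T|]_(f : {ffun T -> 'I_4} | is_RDRD e f) weight f.

Definition gamma_rR (T : finType) (e : rel T) : nat :=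
  \big[minn/2 * #|T|]_(f : {ffun T -> 'I_3} | is_RRD e f) weight f.

From mathcomp Require Import all_boot all_order zify.
Set Implicit Arguments. Unset Strict Implicit.

(* Fix an RRD function f of minimum weight w.
   - If some vertex has f-value 0, map the values 0, 1, 2 of f to 0, 2, 3.
     The result is RDRD (a 0-vertex keeps its 0-neighbour and its 2-neighbour
     becomes a 3-neighbour), and its weight is 2w - #{v | f v = 2}.  A 0-vertex
     v has a 2-neighbour x and a 0-neighbour u, and u has a 2-neighbour y;
     y <> x since otherwise v, u, x is a triangle, so the weight is <= 2w - 2.
   - Otherwise w >= n.  A connected graph on >= 3 vertices has a vertex b with
     two distinct neighbours a, c; the function equal to 1 on a and c and to 2
     elsewhere is RDRD of weight 2n - 2 <= 2w - 2.
   The file first relates the minima gamma_rdR, gamma_rR to witnesses, then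
   proves the weight and validity facts of the two constructions and the two
   graph-theoretic facts, and finally combines them. *)

Lemma bigmin_le (I : eqType) (r : seq I) (P : pred I) (F : I -> nat) m g :
  g \in r -> P g -> \big[minn/m]_(i <- r | P i) F i <= F g.
Proof.
elim: r => [//|a r IH]; rewrite inE big_cons => /orP [/eqP <-|gr] Pg.
  by rewrite Pg geq_minl.
by case: (P a); rewrite ?geq_min IH ?orbT.
Qed.

Lemma bigmin_attained (I : eqType) (r : seq I) (P : pred I) (F : I -> nat) m :
  (exists2 g, P g & F g = m) ->
  exists2 g, P g & F g = \big[minn/m]_(i <- r | P i) F i.
Proof.
move=> m_attained; apply: (big_ind (fun x => exists2 g, P g & F g = x)) => //.
  move=> x y [g1 P1 <-] [g2 P2 <-]; rewrite /minn.
  by case: ltnP => _; [exists g1 | exists g2].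
by move=> i Pi; exists i.
Qed.

Section RestrainedRoman.
Variables (T : finType) (e : rel T).

Lemma gamma_rdR_le (g : {ffun T -> 'I_4}) : is_RDRD e g -> gamma_rdR e <= weight g.
Proof. by move=> RDRDg; apply: bigmin_le; rewrite ?mem_index_enum. Qed.

(* gamma_rR is the weight of an actual RRD function (the constant 2 is RRD). *)
Lemma gamma_rR_attained : exists2 f, is_RRD e f & weight f = gamma_rR e.
Proof.
apply: bigmin_attained; exists [ffun => inord 2].
  by apply/forallP => v; rewrite ffunE inordK.
rewrite /weight (eq_bigr (fun _ => 2)) => [|v _]; last by rewrite ffunE inordK.
by rewrite sum_nat_const mulnC.
Qed.

Lemma card_le_weight k (f : {ffun T -> 'I_k}) :
  (forall v, 0 < f v) -> #|T| <= weight f.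
Proof. by move=> f_pos; rewrite -sum1_card; apply: leq_sum => v _; apply: f_pos. Qed.

Definition lift_RRD (f : {ffun T -> 'I_3}) : {ffun T -> 'I_4} :=
  [ffun v => inord (f v + (0 < f v))].

Lemma lift_RRDE f v : lift_RRD f v = f v + (0 < f v) :> nat.
Proof. by rewrite ffunE inordK //; case: (f v) => -[|[|[|]]]. Qed.

Lemma weight_lift_RRD f :
  weight (lift_RRD f) + #|[set v | nat_of_ord (f v) == 2]| = 2 * weight f.
Proof.
rewrite /weight -sum1dep_card [X in _ + X]big_mkcond -big_split big_distrr /=.
by apply: eq_bigr => v _; rewrite lift_RRDE; case: (f v) => -[|[|[|]]].
Qed.

(* The lift of an RRD function is RDRD: its zeros are those of f, a
   2-neighbour becomes a 3-neighbour, and no vertex gets value 1. *)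
Lemma lift_RRD_is_RDRD f : is_RRD e f -> is_RDRD e (lift_RRD f).
Proof.
move=> /forallP RRDf; apply/forallP => v; rewrite !lift_RRDE.
have [fv0|] := boolP (nat_of_ord (f v) == 0); last first.
  by case: (f v) => -[|[|[|]]].
have /andP [/implyP/(_ fv0)/existsP [a /andP [eva fa]]
            /implyP/(_ fv0)/existsP [b /andP [evb fb]]] := RRDf v.
rewrite (eqP fv0) /= andbT; apply/andP; split.
  by apply/orP; right; apply/existsP; exists a; rewrite eva lift_RRDE (eqP fa).
by apply/existsP; exists b; rewrite evb lift_RRDE (eqP fb).
Qed.

Definition cherry_RDRD (a c : T) : {ffun T -> 'I_4} :=
  [ffun v => inord (if (v == a) || (v == c) then 1 else 2)].

Lemma cherry_RDRDE a c v :
  cherry_RDRD a c v = (if (v == a) || (v == c) then 1 else 2) :> nat.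
Proof. by rewrite ffunE inordK //; case: ifP. Qed.

Lemma weight_cherry_RDRD a c : a != c -> weight (cherry_RDRD a c) + 2 = 2 * #|T|.
Proof.
move=> ac; have card_ac : #|[set a; c]| = 2 by rewrite cards2 ac.
rewrite -[X in _ + X = _]card_ac -sum1_card [X in _ + X]big_mkcond /weight.
rewrite -big_split (eq_bigr (fun _ => 2)) => [|v _]; first by rewrite sum_nat_const mulnC.
by rewrite cherry_RDRDE in_set2; case: ifP.
Qed.

Hypotheses (e_sym : symmetric e) (e_irr : irreflexive e).

(* If b is adjacent to a and c, the two 1-vertices a, c see the 2-vertex b
   (b differs from a and c by irreflexivity), and there are no 0-vertices. *)
Lemma cherry_RDRD_is_RDRD a b c : e b a -> e b c -> is_RDRD e (cherry_RDRD a c).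
Proof.
move=> eba ebc; apply/forallP => v; rewrite !cherry_RDRDE.
have ba : b != a by apply: contraTneq eba => ->; rewrite e_irr.
have bc : b != c by apply: contraTneq ebc => ->; rewrite e_irr.
case: ifP => // /orP vac /=; rewrite andbT.
apply/existsP; exists b; rewrite cherry_RDRDE (negbTE ba) (negbTE bc) andbT.
by case: vac => /eqP ->; rewrite e_sym.
Qed.

(* A shortest path between distinct vertices is either one edge, or its first
   two edges form a vertex with two distinct neighbours. *)
Lemma adjacent_or_two_neighbours x y : connect e x y -> x != y ->
  e x y \/ exists b a c, [/\ a != c, e b a & e b c].
Proof.
move=> /connectP [p /shortenP [[|v [|w q]] /= path_xq uniq_xq _ ->]].
- by rewrite eqxx.
- by move: path_xq => /andP [exv _]; left.
move: path_xq uniq_xq => /and3P [exv evw _].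
rewrite !inE => /andP [/norP [_ /norP [xw _]] _]; right.
by exists v, x, w; rewrite (e_sym v x).
Qed.

(* A connected graph on at least 3 vertices has a vertex of degree >= 2:
   for distinct x, y, z, either a shortest x-y or x-z path has length >= 2,
   or x is adjacent to both y and z. *)
Lemma vertex_with_two_neighbours :
  connected_graph e -> 2 < #|T| -> exists b a c, [/\ a != c, e b a & e b c].
Proof.
move=> conn /card_gt2P [x [y [z [_ [xy yz zx]]]]].
have [exy|//] := adjacent_or_two_neighbours (conn x y) xy.
have xz : x != z by rewrite eq_sym.
have [exz|//] := adjacent_or_two_neighbours (conn x z) xz.
by exists x, y, z.
Qed.

(* In a triangle-free graph, an RRD function with a 0-vertex v has at least
   two 2-vertices: a 2-neighbour of v and one of its 0-neighbour u. *)
Lemma RRD_two_twos (f : {ffun T -> 'I_3}) v :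
  triangle_free e -> is_RRD e f -> nat_of_ord (f v) == 0 ->
  1 < #|[set u | nat_of_ord (f u) == 2]|.
Proof.
move=> tf /forallP RRDf fv0.
have /andP [/implyP/(_ fv0)/existsP [x /andP [evx fx]]
            /implyP/(_ fv0)/existsP [u /andP [evu fu]]] := RRDf v.
have /andP [/implyP/(_ fu)/existsP [y /andP [euy fy]] _] := RRDf u.
apply/card_gt1P; exists x, y; rewrite !inE fx fy; split => //.
apply/eqP => xy; move: (tf v u x).
by rewrite evu xy euy -xy (e_sym x v) evx.
Qed.

End RestrainedRoman.

Theorem proposition2p7 (T : finType) (e : rel T) :
  simple_graph e -> connected_graph e -> triangle_free e -> 3 <= #|T| ->
  gamma_rdR e <= 2 * gamma_rR e - 2.
Proof.
move=> [e_sym e_irr] conn tf n3.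
have [f RRDf <-] := gamma_rR_attained e.
have [v fv0 | f_nonzero] := pickP (fun v => nat_of_ord (f v) == 0).
  have := RRD_two_twos e_sym tf RRDf fv0.
  have := weight_lift_RRD f.
  have := gamma_rdR_le (lift_RRD_is_RDRD RRDf).
  lia.
have [b [a [c [ac eba ebc]]]] := vertex_with_two_neighbours e_sym conn n3.
have := gamma_rdR_le (cherry_RDRD_is_RDRD e_sym e_irr eba ebc).
have := weight_cherry_RDRD ac.
have f_pos v : 0 < f v by rewrite lt0n f_nonzero.
have := card_le_weight f_pos.
lia.
Qed.
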